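(* A quantum channel $\mathcal P$ on $S$ satisfies $\mathcal P(\mathsf{St}(S))=\mathsf P(S)$ if and only if there exists an orthonormal basis $\{|\psi_j\rangle\}_{j=1}^d$ of $\mathbb C^d$ such that $\mathcal P(\rho)=\sum_{j=1}^d\langle\psi_j|\rho|\psi_j\rangle\,\tau_j$ for all $\rho$.
   Context: $S$ is a $d$-dimensional quantum system with non-degenerate Hamiltonian $H=\sum_i E_i|i\rangle\langle i|$, $E_1<\dots<E_d$. $\mathsf{St}(S)$ is the set of density matrices; $\mathsf P(S)$ is the set of passive states, i.e. states $\sum_i p_i|i\rangle\langle i|$ with $p_1\ge\dots\ge p_d$. For $j=1,\dots,d$, $\tau_j=\frac1j\sum_{i=1}^j|i\rangle\langle i|$. *)

From HB Require Import structures.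
From mathcomp Require Import all_boot all_order all_algebra.
Set Implicit Arguments. Unset Strict Implicit. Unset Printing Implicit Defensive.
Import Order.TTheory GRing.Theory Num.Theory.
Local Open Scope ring_scope.
Local Open Scope sesquilinear_scope.

Section QDefs.
Context {C : numClosedFieldType}.

Definition psdF (T : finType) (M : T -> T -> C) : Prop :=
  (forall x y, M x y = (M y x)^*) /\
  (forall v : T -> C, 0 <= \sum_x \sum_y (v x)^* * M x y * v y).

Definition psdmx (d : nat) (A : 'M[C]_d) : Prop := psdF (fun i j => A i j).

(* Complete positivity: for every n, id_n (x) P maps PSD operators on
   C^n (x) C^d (indexed by 'I_n * 'I_d, blocks X a b) to PSD operators. *)
Definition completely_positive (d : nat) (P : 'M[C]_d -> 'M[C]_d) : Prop :=
  forall (n : nat) (X : 'I_n -> 'I_n -> 'M[C]_d),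
    psdF (fun p q : 'I_n * 'I_d => X p.1 q.1 p.2 q.2) ->
    psdF (fun p q : 'I_n * 'I_d => P (X p.1 q.1) p.2 q.2).

Definition quantum_channel (d : nat) (P : 'M[C]_d -> 'M[C]_d) : Prop :=
  [/\ linear P, (forall A, \tr (P A) = \tr A) & completely_positive P].

Definition is_state (d : nat) (rho : 'M[C]_d) : Prop := psdmx rho /\ \tr rho = 1.

(* P(S): passive states, diagonal in the energy basis (standard basis, index
   order = increasing energy) with nonincreasing populations. *)
Definition passive (d : nat) (rho : 'M[C]_d) : Prop :=
  is_state rho /\
  exists p : 'I_d -> C, rho = diag_mx (\row_i p i) /\
                        (forall i j : 'I_d, (i <= j)%N -> p j <= p i).

(* tau_j = (1/j) sum_{i<=j} |i><i| ; here j is 0-based, so the paper's tau_{j+1}. *)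
Definition tau (d : nat) (j : 'I_d) : 'M[C]_d :=
  (j.+1%:R)^-1 *: \sum_(i < d | (i <= j)%N) delta_mx i i.

Definition orthonormal_basis (d : nat) (psi : 'I_d -> 'cV[C]_d) : Prop :=
  forall i j, (psi i)^t* *m psi j = (i == j)%:R%:M.

Definition expval (d : nat) (psi : 'cV[C]_d) (rho : 'M[C]_d) : C :=
  ((psi^t* *m rho *m psi) ord0 ord0).

End QDefs.

From HB Require Import structures.
From mathcomp Require Import all_boot all_order all_algebra ring.
Import Order.TTheory GRing.Theory Num.Theory.
Set Implicit Arguments. Unset Strict Implicit. Unset Printing Implicit Defensive.
Local Open Scope ring_scope.
Local Open Scope sesquilinear_scope.

(* If: the weights <psi_j|rho|psi_j> are nonnegative and sum to tr rho = 1, and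
   convex combinations of the tau_j are passive; conversely a passive sigma has
   nonnegative coordinates q_j = (j+1)(sigma_jj - sigma_(j+1)(j+1)) in the basis
   (tau_j) and is the image of sum_j q_j |psi_j><psi_j|.
   Only if: outputs on states are passive, so P A = sum_k g_k(A) tau_k with
   g_k = q_k o P positive linear functionals summing to the trace (states span
   all matrices).  As tau_j is an output, the spectral theorem gives a unit
   vector u_j with g_k(u_j u_j^* ) = 0 for k <> j; Cauchy-Schwarz then yields
   g_j(u_k u_l^* ) = [k = l = j], the trace identity makes (u_j) orthonormal,
   and g_j = <u_j| . |u_j> on the basis (u_k u_l^* ). *)

Section PositiveSemidefinite.
Context {C : numClosedFieldType} {n : nat}.
Implicit Types (u v w : 'cV[C]_n) (A B : 'M[C]_n).

Lemma outerE v w x y : (v *m w^t*) x y = v x 0 * (w y 0)^*.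
Proof. by rewrite !mxE big_ord1 !mxE. Qed.

Lemma dotE u v : (u^t* *m v) 0 0 = \sum_x (u x 0)^* * v x 0.
Proof. by rewrite !mxE; apply: eq_bigr => x _; rewrite !mxE. Qed.

Lemma expvalE u A : expval u A = \sum_x \sum_y (u x 0)^* * A x y * u y 0.
Proof.
rewrite /expval mxE exchange_big /=; apply: eq_bigr => y _; rewrite mxE mulr_suml.
by apply: eq_bigr => x _; rewrite !mxE.
Qed.

Lemma tr_outer v w : \tr (v *m w^t*) = (w^t* *m v) 0 0.
Proof. by rewrite dotE; apply: eq_bigr => x _; rewrite outerE mulrC. Qed.

Lemma dot_ge0 v : 0 <= (v^t* *m v) 0 0.
Proof. by rewrite dotE; apply: sumr_ge0 => x _; rewrite mulrC mul_conjC_ge0. Qed.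

Lemma dot_eq0 v : ((v^t* *m v) 0 0 == 0) = (v == 0).
Proof.
apply/idP/eqP => [|->]; last by rewrite mulmx0 mxE.
rewrite dotE psumr_eq0 => [/allP v0|x _]; last by rewrite mulrC mul_conjC_ge0.
apply/matrixP => x y; rewrite ord1 mxE.
have /implyP/(_ isT) := v0 x (mem_index_enum x).
by rewrite mulf_eq0 conjC_eq0 orbb => /eqP.
Qed.

Lemma psd_outer v : psdmx (v *m v^t*).
Proof.
split => [x y|a]; first by rewrite !outerE rmorphM /= conjCK mulrC.
have -> : \sum_x \sum_y (a x)^* * (v *m v^t*) x y * a y =
    (\sum_x (a x)^* * v x 0) * (\sum_x (a x)^* * v x 0)^*.
  rewrite rmorph_sum mulr_suml; apply: eq_bigr => x _.
  rewrite mulr_sumr; apply: eq_bigr => y _.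
  by rewrite outerE rmorphM /= conjCK; ring.
exact: mul_conjC_ge0.
Qed.

Lemma psd0 : psdmx (0 : 'M[C]_n).
Proof.
split => [x y|a]; first by rewrite !mxE rmorph0.
by rewrite big1 // => x _; rewrite big1 // => y _; rewrite mxE mulr0 mul0r.
Qed.

Lemma psdD A B : psdmx A -> psdmx B -> psdmx (A + B).
Proof.
move=> [hA pA] [hB pB]; split => [x y|a]; first by rewrite !mxE hA hB rmorphD.
rewrite (eq_bigr (fun x => \sum_y (a x)^* * A x y * a y +
                           \sum_y (a x)^* * B x y * a y)) => [|x _].
  by rewrite big_split addr_ge0.
by rewrite -big_split; apply: eq_bigr => y _; rewrite mxE mulrDr mulrDl.
Qed.

Lemma psdZ c A : 0 <= c -> psdmx A -> psdmx (c *: A).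
Proof.
move=> c0 [hA pA]; split => [x y|a].
  by rewrite !mxE rmorphM /= geC0_conj // -hA.
rewrite (eq_bigr (fun x => c * \sum_y (a x)^* * A x y * a y)) => [|x _].
  by rewrite -mulr_sumr mulr_ge0.
by rewrite mulr_sumr; apply: eq_bigr => y _; rewrite mxE; ring.
Qed.

Lemma psd_sum (I : finType) (c : I -> C) (M : I -> 'M[C]_n) :
  (forall i, 0 <= c i) -> (forall i, psdmx (M i)) -> psdmx (\sum_i c i *: M i).
Proof.
move=> c0 M0; apply: (big_ind (@psdmx C n)); [exact: psd0 | exact: psdD |].
by move=> i _; apply: psdZ.
Qed.

Lemma psd_expval u A : psdmx A -> 0 <= expval u A.
Proof. by move=> [_ pA]; rewrite expvalE; apply: (pA (fun x => u x 0)). Qed.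

Lemma psd_diag A i : psdmx A -> 0 <= A i i.
Proof.
move=> /(psd_expval (delta_mx i 0)); rewrite expvalE (bigD1 i) //=.
rewrite [X in _ + X]big1 => [|x xi]; last first.
  by rewrite big1 // => y _; rewrite !mxE (negPf xi) rmorph0 !mul0r.
rewrite (bigD1 i) //= big1 => [|y yi]; last by rewrite !mxE (negPf yi) mulr0.
by rewrite !mxE eqxx rmorph1 mul1r mulr1 !addr0.
Qed.

Lemma delta_outer (k l : 'I_n) :
  delta_mx k l = (delta_mx k 0 : 'cV[C]_n) *m (delta_mx l 0 : 'cV[C]_n)^t*.
Proof.
apply/matrixP => x y; rewrite outerE !mxE.
by case: (x == k); case: (y == l);
   rewrite /= ?rmorph1 ?rmorph0 ?mulr1 ?mulr0 ?mul0r.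
Qed.

Lemma psd_diag_mx (p : 'rV[C]_n) : (forall i, 0 <= p 0 i) -> psdmx (diag_mx p).
Proof.
move=> p0; rewrite diag_mx_sum_delta; apply: psd_sum => // i.
by rewrite delta_outer; apply: psd_outer.
Qed.

Lemma outer_state v : v != 0 ->
  is_state (((v^t* *m v) 0 0)^-1 *: (v *m v^t*)) /\
  v *m v^t* = (v^t* *m v) 0 0 *: (((v^t* *m v) 0 0)^-1 *: (v *m v^t*)).
Proof.
rewrite -dot_eq0 => v0; split; last by rewrite scalerA mulfV // scale1r.
split; first by apply: psdZ; [rewrite invr_ge0 dot_ge0 | apply: psd_outer].
by rewrite mxtraceZ tr_outer mulVf.
Qed.

End PositiveSemidefinite.

Section Functionals.
Context {C : numClosedFieldType} {n : nat}.
Implicit Types (u v w : 'cV[C]_n) (A : 'M[C]_n).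

(* A real quadratic s |-> s x + s^2 b that stays nonnegative has no linear
   term (x is real, and s = -x/(b+1) gives -s^2 >= 0); this is the heart of
   the Cauchy-Schwarz argument below. *)
Lemma quadratic_ge0_lin_eq0 (x b : C) : 0 <= b ->
  (forall s : C, s \is Num.real -> 0 <= s * x + s ^+ 2 * b) -> x = 0.
Proof.
move=> b0 H; have br : b \is Num.real by apply: ger0_real.
have xr : x \is Num.real.
  have := H 1 (real1 _); rewrite mul1r expr1n mul1r => /ger0_real xb.
  by have := realB xb br; rewrite addrK.
have b1 : b + 1 != 0 by rewrite gt_eqF // ltr_wpDl // ltr01.
set t := x / (b + 1); have tr : t \is Num.real by rewrite realM // realV realD.
have xt : x = t * (b + 1) by rewrite /t divfK.
have := H (- t); rewrite realN => /(_ tr).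
have -> : - t * x + (- t) ^+ 2 * b = - t ^+ 2 by rewrite xt; ring.
rewrite oppr_ge0 => t2le; have /eqP : t ^+ 2 = 0.
  by apply/eqP; rewrite eq_le t2le -realEsqr.
by rewrite expf_eq0 /= => /eqP t0; rewrite xt t0 mul0r.
Qed.

Lemma outer_expand v w c :
  (v + c *: w) *m (v + c *: w)^t* = v *m v^t* + c^* *: (v *m w^t*)
     + c *: (w *m v^t*) + (c * c^*) *: (w *m w^t*).
Proof.
have tcD (a b : 'cV[C]_n) : (a + b)^t* = a^t* + b^t*.
  by apply/matrixP => i j; rewrite !mxE rmorphD.
have tcZ (a : 'cV[C]_n) : (c *: a)^t* = c^* *: a^t*.
  by apply/matrixP => i j; rewrite !mxE rmorphM.
rewrite tcD tcZ mulmxDl !mulmxDr -!scalemxAl -!scalemxAr scalerA.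
by rewrite [c * _]mulrC !addrA.
Qed.

(* Polarization: rank-one psd matrices span all matrices, so a linear map
   vanishing on every v v^* vanishes identically. *)
Lemma linear_outer_eq0 (V : lmodType C) (h : {linear 'M[C]_n -> V}) :
  (forall v, h (v *m v^t*) = 0) -> forall A, h A = 0.
Proof.
move=> h0.
have h_outer v w : h (v *m w^t*) = 0.
  have e c : c^* *: h (v *m w^t*) + c *: h (w *m v^t*) = 0.
    have := h0 (v + c *: w).
    by rewrite outer_expand !linearD !linearZ /= !h0 add0r scaler0 addr0.
  have /eqP := e 1; rewrite rmorph1 !scale1r addrC addr_eq0 => /eqP hwv.
  have /eqP := e 'i; rewrite hwv conjCi scaleNr scalerN -opprD oppr_eq0.
  rewrite -mulr2n -scaler_nat scalerA scaler_eq0 mulf_eq0 pnatr_eq0 /=.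
  by rewrite (negPf (neq0Ci _)) /= => /eqP.
move=> A; rewrite [A]matrix_sum_delta linear_sum big1 // => k _.
rewrite linear_sum big1 // => l _.
by rewrite linearZ /= delta_outer h_outer scaler0.
Qed.

Lemma linear_states_eq (V : lmodType C) (f h : {linear 'M[C]_n -> V}) :
  (forall rho, is_state rho -> f rho = h rho) -> f =1 h.
Proof.
move=> fh A; apply/eqP; rewrite -subr_eq0; apply/eqP.
apply: (linear_outer_eq0 (h := f \- h)) => v /=.
have [->|v0] := eqVneq v 0.
  by rewrite mul0mx [f _]linear0 [h _]linear0 subrr.
have [st ->] := outer_state v0.
by rewrite [f _]linearZ [h _]linearZ fh // subrr.
Qed.

Definition positive_functional (g : 'M[C]_n -> C) : Prop :=
  forall v, 0 <= g (v *m v^t*).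

Lemma positive_on_states (g : {scalar 'M[C]_n}) :
  (forall rho, is_state rho -> 0 <= g rho) -> positive_functional g.
Proof.
move=> gs v; have [->|v0] := eqVneq v 0; first by rewrite mul0mx [g _]linear0.
have [st ->] := outer_state v0.
by rewrite linearZ /= mulr_ge0 ?dot_ge0 ?gs.
Qed.

(* Cauchy-Schwarz for the positive sesquilinear form (w, u) |-> g (u w^* ):
   if g (u u^* ) = 0 then all mixed terms involving u vanish. *)
Lemma positive_null_outer (g : {scalar 'M[C]_n}) u :
  positive_functional g -> g (u *m u^t*) = 0 ->
  forall w, g (u *m w^t*) = 0 /\ g (w *m u^t*) = 0.
Proof.
move=> gpos gu0 w.
set a := g (u *m w^t*); set c := g (w *m u^t*); have b0 := gpos w.
have E z : g ((u + z *: w) *m (u + z *: w)^t*) =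
           z^* * a + z * c + z * z^* * g (w *m w^t*).
  by rewrite outer_expand !linearD !linearZ /= gu0 add0r.
(* Real and imaginary directions: a + c = 0 and c - a = 0. *)
have ac0 : a + c = 0.
  apply: (quadratic_ge0_lin_eq0 b0) => s sr.
  by have := gpos (u + s *: w); rewrite E conj_Creal //; congr (_ <= _); ring.
have ca0 : 'i * (c - a) = 0.
  apply: (quadratic_ge0_lin_eq0 b0) => s sr.
  have := gpos (u + (s * 'i) *: w); rewrite E rmorphM /= conj_Creal // conjCi.
  have ii : 'i * 'i = -1 :> C by rewrite mulCii.
  by congr (_ <= _); rewrite -[s ^+ 2]mulr1 -[1]opprK -ii; ring.
have ca : c = a.
  by move/eqP: ca0; rewrite mulf_eq0 (negPf (neq0Ci _)) subr_eq0 => /eqP.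
move/eqP: ac0; rewrite ca -mulr2n -mulr_natl mulf_eq0 pnatr_eq0 /= => /eqP a0.
by rewrite a0.
Qed.

Lemma state_spectral (rho : 'M[C]_n) : is_state rho ->
  exists (w : 'I_n -> 'cV[C]_n) (p : 'I_n -> C),
    [/\ forall m, ((w m)^t* *m w m) 0 0 = 1, forall m, 0 <= p m,
        \sum_m p m = 1 & rho = \sum_m p m *: (w m *m (w m)^t*)].
Proof.
move=> [rho_psd rho_tr].
have herm : rho \is hermsymmx.
  apply/is_hermitianmxP; rewrite expr0 scale1r; apply/matrixP => i j.
  by rewrite !mxE; case: rho_psd => -> _.
have /orthomx_spectralP := hermitian_normalmx herm.
set U := spectralmx rho; set D := spectral_diag rho.
rewrite invmx_unitary ?spectral_unitarymx // => rhoE.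
have UU : U *m U^t* = 1%:M by apply/unitarymxP/spectral_unitarymx.
pose w m : 'cV[C]_n := (row m U)^t*.
have wE m x : w m x 0 = (U m x)^* by rewrite !mxE.
have decomp : rho = \sum_m D 0 m *: (w m *m (w m)^t*).
  apply/matrixP => x y; rewrite summxE {1}rhoE mul_mx_diag mxE.
  by apply: eq_bigr => k _; rewrite [in RHS]mxE outerE !wE !mxE conjCK; ring.
have w_unit m : ((w m)^t* *m w m) 0 0 = 1.
  rewrite dotE; have := congr1 (fun M : 'M[C]_n => M m m) UU.
  rewrite !mxE eqxx mulr1n => <-.
  by apply: eq_bigr => x _; rewrite wE conjCK !mxE mulrC.
exists w, (fun m => D 0 m); split => // [m|].
  (* eigenvalues are expectation values in eigenvectors, hence nonnegative *)
  have -> : D 0 m = expval (w m) rho.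
    have -> : D 0 m = (U *m rho *m U^t*) m m.
      by rewrite rhoE !mulmxA UU mul1mx -mulmxA UU mulmx1 mxE eqxx mulr1n.
    rewrite expvalE mxE exchange_big /=; apply: eq_bigr => j _.
    rewrite [(U *m rho) m j]mxE mulr_suml; apply: eq_bigr => i _.
    by rewrite !wE conjCK [(U ^t*) j m]mxE [(U ^T) j m]mxE; ring.
  exact: psd_expval.
rewrite -rho_tr [in RHS]decomp raddf_sum; apply: eq_bigr => k _.
by rewrite /= mxtraceZ tr_outer w_unit mulr1.
Qed.

Lemma state_support_vector (rho : 'M[C]_n) : is_state rho ->
  exists2 u : 'cV[C]_n, (u^t* *m u) 0 0 = 1 &
    forall g : {scalar 'M[C]_n}, positive_functional g -> g rho = 0 ->
      g (u *m u^t*) = 0.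
Proof.
move=> /state_spectral[w [p [w_unit p_ge0 p_sum1 rhoE]]].
have [m pm] : exists m, p m != 0.
  apply/existsP; apply: contraT; rewrite negb_exists => /forallP p0.
  rewrite -(oner_eq0 C) -p_sum1 big1 // => m _; apply/eqP; exact: negbNE (p0 m).
exists (w m) => // g g_pos g_rho.
have terms_ge0 k : true -> 0 <= p k * g (w k *m (w k)^t*) by rewrite mulr_ge0.
have : \sum_k p k * g (w k *m (w k)^t*) = 0.
  rewrite -[RHS]g_rho rhoE linear_sum.
  by apply: eq_bigr => k _; rewrite linearZ.
move=> /(psumr_eq0P terms_ge0)/(_ m isT)/eqP.
by rewrite mulf_eq0 (negPf pm) => /eqP.
Qed.

End Functionals.

Section TauBasis.
Context {C : numClosedFieldType} {n : nat}.
Local Notation N := n.+1.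
Implicit Types (M sigma : 'M[C]_N).

Definition tau_weight (j x : nat) : C := (x <= j)%:R / (j.+1)%:R.

Lemma tau_diag (j : 'I_N) : tau j = diag_mx (\row_x tau_weight j x).
Proof.
apply/matrixP => x y; rewrite /tau /tau_weight !mxE summxE big_mkcond /=.
rewrite (bigD1 x) //= big1 => [|i ix]; last first.
  by case: ifP => // _; rewrite mxE eq_sym (negPf ix) andFb.
rewrite mxE eqxx [y == x]eq_sym addr0.
by case: (x <= j)%N; case: (x == y);
   rewrite /= ?mulr1n ?mulr0n ?mulr1 ?mulr0 ?mul0r ?mul0rn ?div1r.
Qed.

Lemma tr_tau (j : 'I_N) : \tr (tau j : 'M[C]_N) = 1.
Proof.
rewrite tau_diag mxtrace_diag /tau_weight.
under eq_bigr do rewrite mxE.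
rewrite -mulr_suml (eq_bigr (fun i : 'I_N => if (i < j.+1)%N then 1 else 0)).
  rewrite -big_mkcond /= (big_ord_narrow (ltn_ord j)) sumr_const card_ord.
  by rewrite divff // pnatr_eq0.
by move=> i _; rewrite ltnS; case: (i <= j)%N.
Qed.

Lemma tau_combE (c : 'I_N -> C) :
  \sum_k c k *: tau k = diag_mx (\row_x \sum_k c k * tau_weight k x).
Proof.
under eq_bigr do rewrite tau_diag -linearZ.
rewrite -linear_sum; congr diag_mx; apply/rowP => x.
by rewrite !mxE summxE; apply: eq_bigr => k _; rewrite !mxE.
Qed.

(* The k-th diagonal entry of M, read as 0 past the last index, and the
   coordinates of (the diagonal part of) M in the basis (tau j)_j:
   tau_coord k M = (k+1) (M_kk - M_(k+1)(k+1)). *)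
Definition diag_entry M (k : nat) : C :=
  if (k < N)%N then M (inord k) (inord k) else 0.

Definition tau_coord (k : nat) M : C :=
  (k.+1)%:R * (diag_entry M k - diag_entry M k.+1).

Lemma tau_coord_is_linear k : scalar (tau_coord k).
Proof.
move=> a A B; rewrite /tau_coord /diag_entry.
by case: ifP; case: ifP => _ _; rewrite ?mxE; ring.
Qed.

HB.instance Definition _ k :=
  GRing.isLinear.Build C 'M[C]_N C *%R (tau_coord k) (tau_coord_is_linear k).

(* Summation by parts: the tau coordinates recombine into the diagonal. *)
Lemma tau_coord_weights M (x : 'I_N) :
  \sum_(k < N) tau_coord k M * tau_weight k x = M x x.
Proof.
have -> : \sum_(k < N) tau_coord k M * tau_weight k x =
          \sum_(x <= k < N) (diag_entry M k - diag_entry M k.+1).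
  rewrite big_geq_mkord [RHS]big_mkcond /=; apply: eq_bigr => k _.
  rewrite /tau_coord /tau_weight; case: (x <= k)%N; rewrite ?mul0r ?mulr0 //.
  by rewrite mul1r mulrAC divff ?mul1r // pnatr_eq0.
rewrite (telescope_sumr_eq (fun k => - diag_entry M k)) ?(ltnW (ltn_ord x)) //.
  by rewrite /diag_entry ltnn ltn_ord inord_val oppr0 sub0r opprK.
by move=> k _; rewrite opprK addrC.
Qed.

Definition tau_expand M : 'M[C]_N := \sum_(k < N) tau_coord k M *: tau k.

Lemma tau_expand_is_linear : linear tau_expand.
Proof.
move=> a A B; rewrite /tau_expand scaler_sumr -big_split /=.
by apply: eq_bigr => k _; rewrite linearP /= scalerDl scalerA.
Qed.

HB.instance Definition _ :=
  GRing.isLinear.Build C 'M[C]_N 'M[C]_N *:%R tau_expand tau_expand_is_linear.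

Lemma tau_expandE M : tau_expand M = diag_mx (\row_x M x x).
Proof.
rewrite /tau_expand tau_combE; congr diag_mx; apply/rowP => x.
by rewrite !mxE tau_coord_weights.
Qed.

Lemma tau_coord_sum M : \sum_(k < N) tau_coord k M = \tr M.
Proof.
have := congr1 mxtrace (tau_expandE M).
rewrite /tau_expand raddf_sum mxtrace_diag.
under eq_bigr do rewrite /= mxtraceZ tr_tau mulr1.
by move->; apply: eq_bigr => x _; rewrite mxE.
Qed.

Lemma tau_coord_tau (j k : 'I_N) : tau_coord k (tau j) = (k == j)%:R.
Proof.
have diag_tau (m : nat) : diag_entry (tau j) m = tau_weight j m.
  rewrite /diag_entry /tau_weight; case: ifP => mN.
    by rewrite tau_diag !mxE eqxx mulr1n inordK.
  suff -> : (m <= j)%N = false by rewrite mul0r.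
  by apply: contraFF mN => mj; apply: leq_ltn_trans mj (ltn_ord j).
rewrite /tau_coord !diag_tau /tau_weight -mulrBl.
case: (ltngtP k j) => [kj|jk|/val_inj ->].
- by rewrite subrr mul0r mulr0 -val_eqE /= (ltn_eqF kj).
- by rewrite subrr mul0r mulr0 -val_eqE /= (gtn_eqF jk).
- by rewrite subr0 eqxx mul1r mulfV // pnatr_eq0.
Qed.

Lemma passive_diagE sigma : passive sigma -> sigma = diag_mx (\row_x sigma x x).
Proof.
move=> [_ [p [-> _]]]; apply/matrixP => x y.
by rewrite !mxE; case: eqVneq => [->|]; rewrite ?mxE ?eqxx ?mulr0n.
Qed.

Lemma tau_coord_ge0 sigma (k : 'I_N) : passive sigma -> 0 <= tau_coord k sigma.
Proof.
move=> [[psd_sigma _] [p [sigmaE p_dec]]].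
rewrite /tau_coord mulr_ge0 // subr_ge0.
rewrite /diag_entry ltn_ord inord_val; case: ifP => kN; last exact: psd_diag.
by rewrite sigmaE !mxE !eqxx !mulr1n p_dec // inordK.
Qed.

Lemma passive_tau_comb (e : 'I_N -> C) :
  (forall j, 0 <= e j) -> \sum_j e j = 1 -> passive (\sum_j e j *: tau j).
Proof.
move=> e_ge0 e_sum1; rewrite tau_combE.
have weight_ge0 j x : 0 <= tau_weight j x by rewrite divr_ge0 ?ler0n.
split; last first.
  eexists; split => [//|x y xy]; apply: ler_sum => j _; apply: ler_wpM2l => //.
  rewrite ler_wpM2r ?invr_ge0 ?ler0n // ler_nat.
  by case: (leqP y j) => // yj; rewrite (leq_trans xy yj).
split.
  by apply: psd_diag_mx => x; rewrite mxE sumr_ge0 // => j _; rewrite mulr_ge0.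
rewrite -tau_combE -e_sum1 raddf_sum; apply: eq_bigr => j _.
by rewrite /= mxtraceZ tr_tau mulr1.
Qed.

Lemma passive_tau (j : 'I_N) : passive (tau j : 'M[C]_N).
Proof.
have -> : tau j = \sum_k (k == j)%:R *: tau k :> 'M[C]_N.
  rewrite (bigD1 j) //= big1 => [|k kj]; last by rewrite (negPf kj) scale0r.
  by rewrite eqxx scale1r addr0.
apply: passive_tau_comb => [k|]; first by rewrite ler0n.
by rewrite (bigD1 j) //= big1 ?eqxx ?addr0 // => k kj; rewrite (negPf kj).
Qed.

End TauBasis.

Section OrthonormalBases.
Context {C : numClosedFieldType} {n : nat}.
Implicit Types (u v w : 'cV[C]_n) (A : 'M[C]_n).

Lemma expval_is_linear u : scalar (expval u).
Proof.
move=> a A B; rewrite /expval mulmxDr mulmxDl -scalemxAr -scalemxAl.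
by rewrite mxE [X in X + _]mxE.
Qed.

HB.instance Definition _ u :=
  GRing.isLinear.Build C 'M[C]_n C *%R (expval u) (expval_is_linear u).

Lemma expval_outer u v w :
  expval u (v *m w^t*) = (u^t* *m v) 0 0 * (w^t* *m u) 0 0.
Proof. by rewrite /expval !mulmxA -mulmxA mxE big_ord1. Qed.

Variable psi : 'I_n -> 'cV[C]_n.
Hypothesis psi_onb : orthonormal_basis psi.

Lemma onb_dot k l : ((psi k)^t* *m psi l) 0 0 = (k == l)%:R.
Proof. by rewrite psi_onb mxE mulr1n. Qed.

(* Completeness: the matrix with columns psi k is unitary, so the
   projectors psi k psi k^* resolve the identity. *)
Lemma onb_complete : \sum_k psi k *m (psi k)^t* = 1%:M.
Proof.
pose U := \matrix_(x, k) psi k x 0.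
have UtU : U^t* *m U = 1%:M.
  apply/matrixP => k l; rewrite [RHS]mxE -onb_dot dotE mxE.
  by apply: eq_bigr => x _; rewrite !mxE.
rewrite -(mulmx1C UtU); apply/matrixP => x y; rewrite summxE mxE.
by apply: eq_bigr => k _; rewrite outerE !mxE.
Qed.

Lemma onb_decomp A :
  A = \sum_k \sum_l ((psi k)^t* *m A *m psi l) 0 0 *: (psi k *m (psi l)^t*).
Proof.
transitivity ((\sum_k psi k *m (psi k)^t*) *m A *m (\sum_l psi l *m (psi l)^t*)).
  by rewrite onb_complete mul1mx mulmx1.
rewrite -mulmxA mulmx_suml; apply: eq_bigr => k _; rewrite !mulmx_sumr.
apply: eq_bigr => l _; rewrite !mulmxA -(mulmxA (psi k) _ A).
rewrite -(mulmxA (psi k) (_ *m A)) {1}[_ *m psi l]mx11_scalar mul_mx_scalar.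
by rewrite scalemxAl.
Qed.

Lemma onb_scalar_eq (f g : {scalar 'M[C]_n}) :
  (forall k l, f (psi k *m (psi l)^t*) = g (psi k *m (psi l)^t*)) -> f =1 g.
Proof.
move=> fg A; rewrite (onb_decomp A) !linear_sum; apply: eq_bigr => k _.
by rewrite !linear_sum; apply: eq_bigr => l _; rewrite !linearZ /= fg.
Qed.

Lemma onb_expval_sum A : \sum_k expval (psi k) A = \tr A.
Proof.
under eq_bigr do rewrite /expval -trace_mx11 -mulmxA mxtrace_mulC -mulmxA.
by rewrite -raddf_sum /= -mulmx_sumr onb_complete mulmx1.
Qed.

End OrthonormalBases.

Section MeasurePrepare.
Context {C : numClosedFieldType} {n : nat}.
Local Notation N := n.+1.

Definition measure_prepare (psi : 'I_N -> 'cV[C]_N) (rho : 'M[C]_N) : 'M[C]_N :=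
  \sum_(j < N) expval (psi j) rho *: tau j.

Variable psi : 'I_N -> 'cV[C]_N.
Hypothesis psi_onb : orthonormal_basis psi.

(* Its image on states is exactly the set of passive states: images are
   convex combinations of the tau j, and a passive sigma is reached from
   the state diagonal in psi with weights the tau coordinates of sigma. *)
Lemma measure_prepare_image (P : 'M[C]_N -> 'M[C]_N) :
  (forall rho, P rho = measure_prepare psi rho) ->
  forall sigma, passive sigma <-> exists rho, is_state rho /\ P rho = sigma.
Proof.
move=> PE sigma; split => [sigma_passive | [rho [[rho_psd rho_tr] <-]]].
- pose rho := \sum_(k < N) tau_coord k sigma *: (psi k *m (psi k)^t*).
  have expval_rho j : expval (psi j) rho = tau_coord j sigma.
    rewrite linear_sum (bigD1 j) //= big1 => [|k kj]; last first.
      by rewrite linearZ /= expval_outer !onb_dot // (negPf kj) !mulr0.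
    by rewrite linearZ /= expval_outer !onb_dot // eqxx !mulr1 addr0.
  exists rho; split; last first.
    rewrite PE /measure_prepare; under eq_bigr do rewrite expval_rho.
    by rewrite -/(tau_expand sigma) tau_expandE -passive_diagE.
  split; first by apply: psd_sum => k; [exact: tau_coord_ge0 | exact: psd_outer].
  case: sigma_passive => [[_ <-] _]; rewrite -(onb_expval_sum psi_onb).
  by rewrite -tau_coord_sum; apply: eq_bigr => j _; rewrite expval_rho.
- rewrite PE; apply: passive_tau_comb => [j|]; first exact: psd_expval.
  by rewrite onb_expval_sum.
Qed.

End MeasurePrepare.

Section PassiveImage.
Context {C : numClosedFieldType} {n : nat}.
Variable P : {linear 'M[C]_n.+1 -> 'M[C]_n.+1}.
Local Notation N := n.+1.
Hypothesis P_tr : forall A, \tr (P A) = \tr A.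
Hypothesis P_image :
  forall sigma, passive sigma <-> exists rho, is_state rho /\ P rho = sigma.

Definition coef (k : nat) : {scalar 'M[C]_N} := tau_coord k \o P.

(* Outputs on states are passive, hence equal to their tau expansion; by
   linearity this holds on all inputs. *)
Lemma channel_tau_expand : P =1 tau_expand \o P.
Proof.
apply: linear_states_eq => rho rho_state.
have out_passive : passive (P rho) by apply/P_image; exists rho.
by rewrite /= tau_expandE -passive_diagE.
Qed.

Lemma coef_positive (k : 'I_N) : positive_functional (coef k).
Proof.
apply: positive_on_states => rho rho_state; apply: tau_coord_ge0.
by apply/P_image; exists rho.
Qed.

Lemma coef_sum A : \sum_(k < N) coef k A = \tr A.
Proof. by rewrite -P_tr -tau_coord_sum. Qed.

(* Each tau j is an output; a unit vector in the support of a preimage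
   state is killed by every coefficient other than the j-th. *)
Lemma tau_support_vectors : exists u : 'I_N -> 'cV[C]_N, forall j,
  ((u j)^t* *m u j) 0 0 = 1 /\ forall k, k != j -> coef k (u j *m (u j)^t*) = 0.
Proof.
suff vector_for (j : 'I_N) : exists v : 'cV[C]_N, (v^t* *m v) 0 0 = 1 /\
    forall k, k != j -> coef k (v *m v^t*) = 0.
  by have [u uP] := fin_all_exists vector_for; exists u.
have [rho [rho_state P_rho]] := (P_image (tau j)).1 (passive_tau j).
have [v v_unit v_null] := state_support_vector rho_state.
exists v; split => // k kj; apply: v_null; first exact: coef_positive.
by rewrite /= P_rho tau_coord_tau (negPf kj).
Qed.

Section SupportVectors.
Variable u : 'I_N -> 'cV[C]_N.
Hypothesis u_unit : forall j, ((u j)^t* *m u j) 0 0 = 1.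
Hypothesis u_null : forall j k : 'I_N, k != j -> coef k (u j *m (u j)^t*) = 0.

(* By Cauchy-Schwarz the j-th coefficient sees only u j on both sides. *)
Lemma coef_outer (j k l : 'I_N) :
  coef j (u k *m (u l)^t*) = ((k == j) && (l == j))%:R.
Proof.
have kill m : m != j -> coef j (u m *m (u m)^t*) = 0.
  by move=> mj; apply: u_null; rewrite eq_sym.
have [kj|kj] := eqVneq k j; last first.
  by case: (positive_null_outer (coef_positive j) (kill k kj) (u l)).
have [lj|lj] := eqVneq l j; last first.
  by case: (positive_null_outer (coef_positive j) (kill l lj) (u k)) => _ ->;
     rewrite andbF.
rewrite kj lj /=; have := coef_sum (u j *m (u j)^t*).
rewrite tr_outer u_unit (bigD1 j) //= big1 ?addr0 // => k' k'j.
exact: u_null.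
Qed.

Lemma support_vectors_onb : orthonormal_basis u.
Proof.
move=> k l; apply/matrixP => a b; rewrite !ord1 [RHS]mxE mulr1n.
rewrite -tr_outer -coef_sum (bigD1 l) // big1 => [|j jl]; last first.
  by rewrite coef_outer eq_sym (negPf jl).
by rewrite coef_outer eqxx /= addr0.
Qed.

Lemma coef_expval (j : 'I_N) : coef j =1 expval (u j).
Proof.
apply: (onb_scalar_eq support_vectors_onb) => k l.
by rewrite coef_outer /= expval_outer !(onb_dot support_vectors_onb) -natrM mulnb
     [j == k]eq_sym.
Qed.

End SupportVectors.

Lemma passive_image_measure_prepare :
  exists psi, orthonormal_basis psi /\
    forall rho, P rho = measure_prepare psi rho.
Proof.
have [u uP] := tau_support_vectors.
have u_unit j := (uP j).1; have u_null j := (uP j).2.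
exists u; split; first exact: support_vectors_onb.
move=> rho; rewrite channel_tau_expand /= /tau_expand.
by apply: eq_bigr => j _; congr (_ *: _); apply: (coef_expval u_unit u_null).
Qed.

End PassiveImage.

(* The theorem: both directions hold for any trace-preserving linear map on a
   nontrivial system. *)
Theorem mainTheorem6 (C : numClosedFieldType) (d : nat) (hd : (0 < d)%N)
    (P : 'M[C]_d -> 'M[C]_d) :
  quantum_channel P ->
  ((forall sigma : 'M[C]_d,
       passive sigma <-> exists rho : 'M[C]_d, is_state rho /\ P rho = sigma)
   <->
   exists psi : 'I_d -> 'cV[C]_d,
     orthonormal_basis psi /\
     forall rho : 'M[C]_d, P rho = \sum_(j < d) expval (psi j) rho *: tau j).
Proof.
case: d hd P => [//|n] _ P [P_linear P_tr _].
pose Pl : {linear 'M[C]_n.+1 -> 'M[C]_n.+1} :=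
  HB.pack P (GRing.isLinear.Build _ _ _ _ P P_linear).
split => [P_image | [psi [psi_onb P_mp]]].
- exact: (passive_image_measure_prepare (P := Pl)).
- exact: measure_prepare_image.
Qed.
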